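(* Let $p\ge2$ and $m\ge1$ be integers and $d=2p$. There exist $W\in\mathbb{R}^{2p\times p}$ and $V\in\mathbb{R}^{p\times 2p}$ such that the sine network $s^\theta(x)=V\sin(Wx)$ satisfies, for every $x\in\mathcal{X}_m$, $s^\theta_{y(x)}(x)=p$ and $s^\theta_q(x)=0$ for all $q\ne y(x)$ (so $h_\theta(x)=y(x)$ with margin $p$), and moreover $\|V\|_2=\sqrt p$ and $\|W\|_F\le\pi\sqrt2\,p$.
   Context: Let $[p]=\{0,\dots,p-1\}$ and $\mathcal{X}_m=\{x\in\{0,\dots,m\}^p:\|x\|_1=m\}$, coordinates indexed by $[p]$; $y(x)=(\sum_{r\in[p]}r\,x_r)\bmod p$. $\sin$ is applied entrywise. The predictor is $h_\theta(x)=\ell$ if $s^\theta_\ell(x)>s^\theta_k(x)$ for all $k\ne\ell$, and $\bot$ otherwise. $\|V\|_2$ is the spectral norm and $\|W\|_F$ the Frobenius norm. *)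

From HB Require Import structures.
From mathcomp Require Import all_boot all_order all_algebra.
From mathcomp Require Import all_classical all_reals all_analysis.
Unset Printing Implicit Defensive.
Import Order.TTheory GRing.Theory Num.Theory.
Local Open Scope ring_scope.
Local Open Scope classical_set_scope.

Definition Xm (p m : nat) : set ('I_p -> nat) :=
  [set x | (forall r, (x r <= m)%N) /\ (\sum_(r < p) x r)%N = m].

Definition ylab (p : nat) (x : 'I_p -> nat) : nat :=
  ((\sum_(r < p) (r : nat) * x r) %% p)%N.

Definition xvec (R : realType) (p : nat) (x : 'I_p -> nat) : 'cV[R]_p :=
  \col_(r < p) ((x r)%:R).

Definition sine_net (R : realType) (p d : nat)
  (W : 'M[R]_(d, p)) (V : 'M[R]_(p, d)) (x : 'I_p -> nat) : 'cV[R]_p :=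
  V *m map_mx (@sin R) (W *m xvec R p x).

Definition l2norm (R : realType) (n : nat) (u : 'cV[R]_n) : R :=
  Num.sqrt (\sum_(i < n) (u i 0) ^+ 2).

Definition frob_norm (R : realType) (m n : nat) (A : 'M[R]_(m, n)) : R :=
  Num.sqrt (\sum_(i < m) \sum_(j < n) (A i j) ^+ 2).

Definition spec_norm (R : realType) (m n : nat) (A : 'M[R]_(m, n)) : R :=
  sup ((fun u : 'cV[R]_n => l2norm R m (A *m u)) @` [set u | l2norm R n u = 1]).

From HB Require Import structures.
From mathcomp Require Import all_boot all_order all_algebra.
From mathcomp Require Import all_classical all_reals all_analysis.
From mathcomp Require Import ring lra.
Import Order.TTheory GRing.Theory Num.Theory.
Local Open Scope classical_set_scope.
Local Open Scope ring_scope.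

(* Let V be the real discrete Fourier matrix: row q lists cos (2 pi i q / p) and
   then sin (2 pi i q / p) for i < p.  Since the p-th roots of unity other than 1
   sum to 0, its rows are orthogonal of squared length p, i.e. V V^T = p I; hence
   ||V||_2 = sqrt p and V maps its own row y to p e_y.  W is chosen so that
   sin (W x) is row y(x) of V: with entries 2 pi i r / p, plus the phase
   pi / (2m) in the cosine block, (W x)_i = 2 pi i (sum_r r x_r) / p (+ pi / 2,
   as ||x||_1 = m), whose sine only depends on sum_r r x_r mod p.  Reducing each
   entry of W modulo 2 pi into [-pi, pi] moves W x by multiples of 2 pi only,
   and bounds ||W||_F by pi sqrt (2 p p). *)

Lemma big_ord_double (V : nmodType) (p : nat) (F : nat -> V) :
  \sum_(i < 2 * p) F i = \sum_(i < p) (F i + F (i + p)%N).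
Proof.
rewrite -(big_mkord xpredT F) mul2n -addnn (big_cat_nat _ (leq_addr p p)) //=.
rewrite -{2}(add0n p) big_addn addnK -big_split /=.
by rewrite big_mkord.
Qed.

Section SineNetwork.
Context {R : realType}.

Lemma sinDz2pi (a : R) (z : int) : sin (a + (pi *+ 2) *~ z) = sin a.
Proof.
case: z => n; first exact: (periodicn (@sinD2pi R)).
rewrite NegzE mulrNz -[in RHS](subrK ((pi *+ 2) *~ n.+1) a).
by rewrite -mulrz_nat (periodicn (@sinD2pi R)).
Qed.

Definition root_angle (p n : nat) : R := pi *+ 2 * n%:R / p%:R.

Lemma root_angleD_mul (p a k : nat) : (0 < p)%N ->
  root_angle p (a + k * p) = root_angle p a + (pi *+ 2) *+ k.
Proof.
move=> p_gt0; have pN0 : p%:R != 0 :> R by rewrite pnatr_eq0 -lt0n.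
by rewrite /root_angle natrD natrM -mulr_natr; field.
Qed.

Lemma root_angleB (p a b : nat) : (b <= a)%N ->
  root_angle p a - root_angle p b = root_angle p (a - b).
Proof. by move=> ba; rewrite /root_angle natrB // mulrBr mulrBl. Qed.

Lemma sum_root_angle (p : nat) (I : finType) (F n : I -> nat) :
  \sum_(r : I) root_angle p (F r) * (n r)%:R = root_angle p (\sum_(r : I) F r * n r)%N.
Proof.
rewrite /root_angle natr_sum mulr_sumr mulr_suml; apply: eq_bigr => r _.
by rewrite natrM; ring.
Qed.

Lemma sum_cos_root_angle (p j : nat) : (0 < j < p)%N ->
  \sum_(i < p) cos (root_angle p (i * j)) = 0.
Proof.
move=> /andP[j_gt0 jp]; have p_gt0 := ltn_trans j_gt0 jp.
have pN0 : p%:R != 0 :> R by rewrite pnatr_eq0 -lt0n.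
set th := root_angle p j.
have thE i : root_angle p (i * j) = i%:R * th by rewrite /th /root_angle natrM; field.
have sin_half_gt0 : 0 < sin (th / 2).
  have -> : th / 2 = pi * (j%:R / p%:R) by rewrite /th /root_angle -mulr_natr; field.
  have jp_gt0 : 0 < j%:R / p%:R :> R by rewrite divr_gt0 // ltr0n.
  have jp_lt1 : j%:R / p%:R < 1 :> R.
    by rewrite ltr_pdivrMr ?ltr0n // mul1r ltr_nat.
  apply: sin_gt0_pi; rewrite mulr_gt0 ?pi_gt0 //=.
  by rewrite -[X in _ < X]mulr1 ltr_pM2l ?pi_gt0.
(* 2 sin(th/2) cos(k th) = sin((k + 1/2) th) - sin((k - 1/2) th) telescopes *)
pose f k := sin (k%:R * th - th / 2).
have telescoped : \sum_(0 <= k < p) (f k.+1 - f k) =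
    sin (th / 2) *+ 2 * \sum_(i < p) cos (root_angle p (i * j)).
  rewrite mulr_sumr -(big_mkord xpredT (fun i => _ * cos (root_angle p (i * j)))).
  apply: eq_bigr => k _; rewrite /f thE -addn1 natrD mulrDl mul1r.
  have -> : k%:R * th + th - th / 2 = k%:R * th + th / 2 by field.
  rewrite sinD sinB; lra.
have f_end : f p = f 0.
  rewrite /f mul0r sub0r.
  have -> : p%:R * th - th / 2 = - (th / 2) + (pi *+ 2) *+ j.
    by rewrite /th /root_angle -mulr_natr; field.
  exact: (periodicn (@sinD2pi R)).
move: telescoped; rewrite telescope_sumr // f_end subrr => /esym/eqP.
by rewrite mulf_eq0 mulrn_eq0 /= (gt_eqF sin_half_gt0) => /eqP.
Qed.

Definition dft_entry (p q i : nat) : R :=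
  if (i < p)%N then cos (root_angle p (i * q)) else sin (root_angle p ((i - p) * q)).

Lemma dft_gram {p q y : nat} : (q < p)%N -> (y < p)%N ->
  \sum_(i < 2 * p) dft_entry p q i * dft_entry p y i = if q == y then p%:R else 0.
Proof.
move=> qp yp; rewrite (big_ord_double _ _ (fun i => dft_entry p q i * dft_entry p y i)).
under eq_bigr => i _.
  rewrite /dft_entry ltn_ord ltnNge leq_addl /= addnK -cosB.
  over.
case: eqP => [<-|/eqP qNy].
  under eq_bigr do rewrite subrr cos0.
  by rewrite sumr_const card_ord.
have [yq|qy] := leqP y q.
  under eq_bigr do rewrite root_angleB ?leq_mul2l ?yq ?orbT // -mulnBr.
  apply: sum_cos_root_angle; rewrite subn_gt0 ltn_neqAle eq_sym qNy yq /=.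
  by rewrite (leq_ltn_trans (leq_subr _ _) qp).
under eq_bigr do rewrite -cosN opprB root_angleB ?leq_mul2l ?(ltnW qy) ?orbT // -mulnBr.
apply: sum_cos_root_angle; rewrite subn_gt0 qy /=.
by rewrite (leq_ltn_trans (leq_subr _ _) yp).
Qed.

(* a minus the multiple of 2 pi nearest to it *)
Definition wrap_angle (a : R) : R :=
  a - (pi *+ 2) *~ Num.floor (a / (pi *+ 2) + 2^-1).

Lemma sin_sum_wrap_angle (I : finType) (a : I -> R) (n : I -> nat) :
  sin (\sum_(r : I) wrap_angle (a r) * (n r)%:R) = sin (\sum_(r : I) a r * (n r)%:R).
Proof.
pose z r := Num.floor (a r / (pi *+ 2) + 2^-1).
have -> : \sum_(r : I) wrap_angle (a r) * (n r)%:R =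
    \sum_(r : I) a r * (n r)%:R + (pi *+ 2) *~ (- \sum_(r : I) z r * (n r)%:Z).
  rewrite -mulrzr rmorphN rmorph_sum /= mulrN mulr_sumr -sumrN -big_split /=.
  apply: eq_bigr => r _; rewrite /wrap_angle -/(z r) -mulrzr rmorphM /= -pmulrn.
  ring.
exact: sinDz2pi.
Qed.

Lemma norm_wrap_angle_le (a : R) : `|wrap_angle a| <= pi.
Proof.
have pi_gt0 : 0 < pi :> R := pi_gt0 R.
set t := a / (pi *+ 2) + 2^-1.
have /andP[floor_le_t t_lt_floor1] := floor_itv t.
rewrite intrD rmorph1 in t_lt_floor1.
have -> : wrap_angle a = pi * ((t - (Num.floor t)%:~R) *+ 2 - 1).
  have aE : a = pi *+ 2 * (t - 2^-1).
    by rewrite /t addrK mulrC divfK // gt_eqF // mulrn_wgt0.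
  by rewrite /wrap_angle -/t -mulrzr {1}aE -mulr_natr; field.
rewrite ler_norml; apply/andP; split; rewrite mulr2n; nra.
Qed.

Definition sine_weight (p m i r : nat) : R :=
  if (i < p)%N then root_angle p (i * r) + pi / (2 * m)%:R
  else root_angle p ((i - p) * r).

Lemma sin_sum_sine_weight (p m i : nat) (x : 'I_p -> nat) : (0 < p)%N -> (0 < m)%N ->
  (\sum_(r < p) x r)%N = m ->
  sin (\sum_(r < p) wrap_angle (sine_weight p m i r) * (x r)%:R) = dft_entry p (ylab p x) i.
Proof.
move=> p_gt0 m_gt0 sum_x; rewrite sin_sum_wrap_angle /sine_weight /dft_entry /ylab.
set S := (\sum_(r < p) r * x r)%N.
have S_divmod : S = (S %% p + S %/ p * p)%N by rewrite addnC -divn_eq.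
have sum_scaled k : (\sum_(r < p) k * r * x r)%N = (k * S)%N.
  by rewrite /S big_distrr; apply: eq_bigr => r _; rewrite /= mulnA.
case: ifP => _; last first.
  rewrite sum_root_angle sum_scaled {1}S_divmod mulnDr mulnA root_angleD_mul //.
  exact: (periodicn (@sinD2pi R)).
under eq_bigr do rewrite mulrDl.
rewrite big_split /= -mulr_sumr sum_root_angle sum_scaled -natr_sum sum_x.
have -> : pi / (2 * m)%:R * m%:R = pi / 2 :> R.
  by rewrite natrM; field; rewrite pnatr_eq0 -lt0n.
rewrite sinDpihalf {1}S_divmod mulnDr mulnA root_angleD_mul //.
exact: (periodicn (@cosD2pi R)).
Qed.

Lemma l2normE {n : nat} (u : 'cV[R]_n) : l2norm R n u = Num.sqrt ((u^T *m u) 0 0).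
Proof. by rewrite /l2norm !mxE; congr Num.sqrt; apply: eq_bigr => i _; rewrite !mxE expr2. Qed.

Lemma sqnorm_ge0 {n : nat} (u : 'cV[R]_n) : 0 <= (u^T *m u) 0 0.
Proof. by rewrite mxE sumr_ge0 // => i _; rewrite mxE -expr2 sqr_ge0. Qed.

Lemma sqnorm_mul_le {n k : nat} {V : 'M[R]_(n, k)} {c : R} (u : 'cV[R]_k) :
  0 < c -> V *m V^T = c%:M -> ((V *m u)^T *m (V *m u)) 0 0 <= c * (u^T *m u) 0 0.
Proof.
move=> c_gt0 VVt; set w := V *m u.
(* V^T V / c is an orthogonal projection, so the defect z below has a nonnegative square norm *)
set z := c *: u - V^T *m w.
have zTz : z^T *m z = c *: (c *: (u^T *m u) - w^T *m w).
  have -> : z^T = c *: u^T - w^T *m V by rewrite /z linearB /= linearZ /= trmx_mul trmxK.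
  rewrite /z mulmxBl !mulmxBr -!scalemxAl -!scalemxAr.
  have -> : u^T *m (V^T *m w) = w^T *m w by rewrite mulmxA -trmx_mul.
  have -> : w^T *m V *m (V^T *m w) = c *: (w^T *m w).
    by rewrite mulmxA -(mulmxA w^T) VVt mul_mx_scalar -scalemxAl.
  rewrite -(mulmxA w^T) scalerA scalerBr scalerA.
  by rewrite subrr subr0.
by have := sqnorm_ge0 z; rewrite zTz !mxE (pmulr_rge0 _ c_gt0) subr_ge0.
Qed.

Lemma spec_norm_scalar_gram (n k : nat) (V : 'M[R]_(n, k)) (c : R) :
  (0 < n)%N -> 0 < c -> V *m V^T = c%:M -> spec_norm R n k V = Num.sqrt c.
Proof.
move=> n_gt0 c_gt0 VVt.
set E := (fun u : 'cV[R]_k => l2norm R n (V *m u)) @` [set u | l2norm R k u = 1].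
have E_ub : ubound E (Num.sqrt c).
  move=> _ [u u_unit <-]; rewrite l2normE ler_sqrt ?(ltW c_gt0) //.
  have uTu : (u^T *m u) 0 0 = 1.
    by rewrite -(sqr_sqrtr (sqnorm_ge0 u)) -l2normE u_unit expr1n.
  by have := sqnorm_mul_le u c_gt0 VVt; rewrite uTu mulr1.
(* the bound is attained at V^T e / sqrt c, for a basis vector e *)
set s := Num.sqrt c; have s_gt0 : 0 < s by rewrite sqrtr_gt0.
have ss : s * s = c by rewrite -expr2 sqr_sqrtr // ltW.
set e : 'cV[R]_n := delta_mx (Ordinal n_gt0) 0.
have eTe : e^T *m e = delta_mx 0 0 by rewrite trmx_delta mul_delta_mx.
set u0 := s^-1 *: (V^T *m e).
have Vu0 : V *m u0 = s *: e.
  rewrite /u0 -scalemxAr mulmxA VVt mul_scalar_mx scalerA -ss.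
  by rewrite mulKf ?gt_eqF.
have u0Tu0 : u0^T *m u0 = delta_mx 0 0.
  have -> : u0^T = s^-1 *: (e^T *m V) by rewrite linearZ /= trmx_mul trmxK.
  rewrite /u0 -scalemxAl -scalemxAr scalerA.
  rewrite mulmxA -(mulmxA e^T) VVt mul_mx_scalar -scalemxAl eTe scalerA -ss.
  have -> : s^-1 / s * (s * s) = 1 by field; rewrite gt_eqF.
  by rewrite scale1r.
have E_s : E s.
  exists u0; first by rewrite /= l2normE u0Tu0 mxE eqxx sqrtr1.
  have sTe : (s *: e)^T = s *: e^T by rewrite linearZ.
  rewrite l2normE Vu0 sTe -scalemxAl -scalemxAr eTe scalerA !mxE eqxx mulr1.
  by rewrite -expr2 sqrtr_sqr gtr0_norm.
apply/eqP; rewrite eq_le; apply/andP; split.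
  by apply: ge_sup => //; exists s.
by apply: ub_le_sup => //; exists s.
Qed.

Lemma frob_norm_le {m n : nat} (A : 'M[R]_(m, n)) (b : R) :
  0 <= b -> (forall i j, `|A i j| <= b) -> frob_norm R m n A <= Num.sqrt (m * n)%:R * b.
Proof.
move=> b_ge0 A_le; rewrite -[b]ger0_norm // -sqrtr_sqr -sqrtrM ?ler0n //.
rewrite /frob_norm ler_sqrt ?mulr_ge0 ?ler0n ?sqr_ge0 //.
have -> : (m * n)%:R * b ^+ 2 = \sum_(i < m) \sum_(j < n) b ^+ 2 :> R.
  by rewrite !sumr_const !card_ord -mulrnA mulr_natl mulnC.
apply: ler_sum => i _; apply: ler_sum => j _.
by rewrite -real_normK ?num_real // lerXn2r ?nnegrE ?normr_ge0.
Qed.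

End SineNetwork.

Theorem mainTheorem12 (R : realType) (p m : nat) (hp : (2 <= p)%N) (hm : (1 <= m)%N) :
  exists (W : 'M[R]_((2 * p)%N, p)) (V : 'M[R]_(p, (2 * p)%N)),
    (forall x : 'I_p -> nat, Xm p m x ->
       forall q : 'I_p,
         @sine_net R p (2 * p)%N W V x q 0 = (if (q : nat) == ylab p x then p%:R else 0)) /\
    spec_norm R p (2 * p)%N V = Num.sqrt (p%:R) /\
    frob_norm R (2 * p)%N p W <= pi * Num.sqrt 2 * p%:R.
Proof.
have p_gt0 : (0 < p)%N by apply: leq_trans hp.
pose W : 'M[R]_((2 * p)%N, p) := \matrix_(i, r) wrap_angle (sine_weight p m i r).
pose V : 'M[R]_(p, (2 * p)%N) := \matrix_(q, i) dft_entry p q i.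
exists W, V; split; [|split].
- move=> x [_ sum_x] q; rewrite /sine_net !mxE -(dft_gram (ltn_ord q) (ltn_pmod _ p_gt0)).
  apply: eq_bigr => i _; rewrite !mxE -(sin_sum_sine_weight _ _ i _ p_gt0 hm sum_x).
  by congr (_ * sin _); apply: eq_bigr => r _; rewrite !mxE.
- apply: spec_norm_scalar_gram; rewrite ?ltr0n //.
  apply/matrixP => q q'; rewrite !mxE -val_eqE mulrb -dft_gram ?ltn_ord //.
  by under eq_bigr do rewrite !mxE.
- have W_le i r : `|W i r| <= pi by rewrite mxE norm_wrap_angle_le.
  apply: le_trans (frob_norm_le W _ (pi_ge0 R) W_le) _.
  rewrite -mulnA !natrM sqrtrM ?ler0n // -expr2 sqrtr_sqr ger0_norm ?ler0n //.
  by rewrite mulrC mulrA.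
Qed.
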